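(* Let $R$ be a commutative ring with identity. The power series ring $R[[x]]$ is complemented if and only if $R$ is reduced and for each countably generated ideal $I$ of $R$ there is a countably generated ideal $J$ of $R$ such that $IJ=0$ and $I+J$ is a dense ideal of $R$.
   Context: An element $a$ of a ring $A$ is complemented if there is $b\in A$ with $ab=0$ and $a+b$ a regular element (non-zero-divisor) of $A$; $A$ is complemented if every element is complemented. An ideal is dense if its annihilator is zero. *)

From HB Require Import structures.
From mathcomp Require Import all_boot all_order all_algebra.
Set Implicit Arguments. Unset Strict Implicit. Unset Printing Implicit Defensive.
Import GRing.Theory.
Local Open Scope ring_scope.

(* A commutative ring is described here by its carrier together with its
   zero, addition and multiplication; for a MathComp ring these are 0, +, *. *)

Definition regular_in (T : Type) (zero : T) (mul : T -> T -> T) (a : T) : Prop :=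
  forall c : T, mul a c = zero -> c = zero.

Definition complemented_elt_in (T : Type) (zero : T) (add mul : T -> T -> T)
    (a : T) : Prop :=
  exists b : T, mul a b = zero /\ regular_in zero mul (add a b).

Definition complemented_in (T : Type) (zero : T) (add mul : T -> T -> T) : Prop :=
  forall a : T, complemented_elt_in zero add mul a.

Definition complemented (R : comPzRingType) : Prop :=
  complemented_in (0 : R) +%R *%R.

(* A power series is its coefficient sequence f : nat -> R
   (f n = coefficient of x^n), with coefficientwise addition and the
   Cauchy product. *)
Definition powerseries (R : comPzRingType) := nat -> R.

Definition ps_zero (R : comPzRingType) : powerseries R := fun _ => 0.
Definition ps_add (R : comPzRingType) (f g : powerseries R) : powerseries R :=
  fun n => f n + g n.
Definition ps_mul (R : comPzRingType) (f g : powerseries R) : powerseries R :=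
  fun n => \sum_(i < n.+1) f i * g (n - i)%N.

Definition powerseries_complemented (R : comPzRingType) : Prop :=
  complemented_in (@ps_zero R) (@ps_add R) (@ps_mul R).

Definition reduced (R : comPzRingType) : Prop :=
  forall (x : R) (n : nat), x ^+ n = 0 -> x = 0.

Definition is_ideal (R : comPzRingType) (I : R -> Prop) : Prop :=
  [/\ I 0,
      (forall x y, I x -> I y -> I (x + y)) &
      (forall r x, I x -> I (r * x))].

Definition ideal_gen (R : comPzRingType) (g : nat -> R) : R -> Prop :=
  fun x => exists (n : nat) (c : nat -> R), x = \sum_(i < n) c i * g i.

(* A countable
   generating set may be enumerated (with repetitions) as a sequence; the
   empty generating set is replaced by the sequence constantly 0. *)
Definition countably_generated (R : comPzRingType) (I : R -> Prop) : Prop :=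
  exists g : nat -> R, forall x, I x <-> ideal_gen g x.

Definition ideal_prod_zero (R : comPzRingType) (I J : R -> Prop) : Prop :=
  forall x y, I x -> J y -> x * y = 0.

Definition ideal_sum (R : comPzRingType) (I J : R -> Prop) : R -> Prop :=
  fun z => exists x y, [/\ I x, J y & z = x + y].

Definition dense (R : comPzRingType) (I : R -> Prop) : Prop :=
  forall r : R, (forall x, I x -> r * x = 0) -> r = 0.

From mathcomp Require Import all_boot all_order all_algebra.
From mathcomp Require Import zify.
From Stdlib Require Import FunctionalExtensionality.
Set Implicit Arguments. Unset Strict Implicit. Unset Printing Implicit Defensive.
Import GRing.Theory.
Local Open Scope ring_scope.

(* Over a reduced ring, f g = 0 in R[[x]] iff f_i g_j = 0 for all i, j
   (for i + j = n, multiply the n-th coefficient of f g by f_i: by induction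
   only f_i (f_i g_j) survives, and reducedness kills it).  So if h is a
   complement of f, the ideals generated by the coefficients of f and of h
   multiply to zero, and whatever annihilates both annihilates the regular
   series f + h, hence is zero.  Conversely, if J = (k_0, k_1, ...) is the
   ideal attached to I = (f_0, f_1, ...), then k is a complement of f:
   (f + k) c = 0 forces f_i c_j = 0 = k_i c_j, so each c_j annihilates the
   dense ideal I + J.  Reducedness itself comes from complementing constants. *)

Section ComplementedPowerSeries.
Variable R : comPzRingType.

Lemma reduced_sqr_eq0 : reduced R <-> forall x : R, x * x = 0 -> x = 0.
Proof.
split=> [red x xx0|sqr0 x [|n]]; first by apply: (red x 2); rewrite expr2.
  by rewrite expr0 => /(congr1 ( *%R x)); rewrite mulr1 mulr0.
elim: n => [|n IHn]; first by rewrite expr1.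
move=> xn0; apply/IHn/sqr0.
by rewrite -exprD -addSnnS exprD xn0 mul0r.
Qed.

Lemma reduced_mulr_sqr_eq0 (x y : R) :
  reduced R -> x * x * y = 0 -> x * y = 0.
Proof.
move=> /reduced_sqr_eq0 sqr0 xxy0; apply: sqr0.
by rewrite mulrACA mulrA xxy0 mul0r.
Qed.

Definition ps_C (a : R) : powerseries R := fun n => if n == 0%N then a else 0.

Lemma ps_mulCl a F n : ps_mul (ps_C a) F n = a * F n.
Proof.
rewrite /ps_mul big_ord_recl subn0 big1 ?addr0 // => i _.
by rewrite /ps_C mul0r.
Qed.

Lemma ps_mulCr a F n : ps_mul F (ps_C a) n = F n * a.
Proof.
rewrite /ps_mul big_ord_recr /= subnn big1 ?add0r // => i _.
by rewrite /ps_C subn_eq0 leqNgt ltn_ord mulr0.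
Qed.

Lemma ps_C_inj_eq0 a : ps_C a = @ps_zero R -> a = 0.
Proof. by move/(congr1 (fun F => F 0%N)); rewrite /ps_C eqxx. Qed.

Lemma regular_ps_coef_ann (F : powerseries R) r :
  regular_in (@ps_zero R) (@ps_mul R) F -> (forall n, F n * r = 0) -> r = 0.
Proof.
move=> regF Fr0; apply/ps_C_inj_eq0/regF/functional_extensionality => n.
by rewrite ps_mulCr Fr0.
Qed.

Lemma ideal_gen0 (g : nat -> R) : ideal_gen g 0.
Proof. by exists 0%N, (fun _ => 0); rewrite big_ord0. Qed.

Lemma ideal_gen_mem (g : nat -> R) i : ideal_gen g (g i).
Proof.
exists i.+1, (fun j => (j == i)%:R).
rewrite big_ord_recr /= eqxx mul1r big1 ?add0r // => j _.
by rewrite (ltn_eqF (ltn_ord j)) mul0r.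
Qed.

Lemma lincomb_widen (g c : nat -> R) n N : (n <= N)%N ->
  \sum_(i < n) c i * g i = \sum_(i < N) (if (i < n)%N then c i else 0) * g i.
Proof.
move=> lenN; rewrite (big_ord_widen _ (fun i => c i * g i) lenN) big_mkcond /=.
by apply: eq_bigr => i _; case: ifP; rewrite ?mul0r.
Qed.

Lemma ideal_gen_is_ideal (g : nat -> R) : is_ideal (ideal_gen g).
Proof.
split; first exact: ideal_gen0.
  move=> _ _ [n [c ->]] [m [d ->]].
  exists (n + m)%N, (fun i => (if (i < n)%N then c i else 0) +
                             (if (i < m)%N then d i else 0)).
  rewrite (lincomb_widen g c (leq_addr m n)).
  rewrite (lincomb_widen g d (leq_addl n m)) -big_split /=.
  by apply: eq_bigr => i _; rewrite mulrDl.
move=> r _ [n [c ->]]; exists n, (fun i => r * c i).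
by rewrite mulr_sumr; apply: eq_bigr => i _; rewrite mulrA.
Qed.

Lemma ideal_gen_ann (g : nat -> R) r x :
  (forall i, r * g i = 0) -> ideal_gen g x -> r * x = 0.
Proof.
move=> rg0 [n [c ->]]; rewrite mulr_sumr big1 // => i _.
by rewrite mulrCA rg0 mulr0.
Qed.

Lemma ideal_gen_prod_zero (g h : nat -> R) :
  (forall i j, g i * h j = 0) -> ideal_prod_zero (ideal_gen g) (ideal_gen h).
Proof.
move=> gh0 x y [n [c ->]] hy; rewrite mulr_suml big1 // => i _.
by rewrite -mulrA (@ideal_gen_ann h (g i) y) ?mulr0.
Qed.

Lemma ps_mul_eq0_coef (a b : powerseries R) : reduced R ->
  ps_mul a b = @ps_zero R -> forall i j, a i * b j = 0.
Proof.
move=> red ab0.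
suff diag n k : (k <= n)%N -> a k * b (n - k)%N = 0.
  by move=> i j; rewrite -(addKn i j) diag ?leq_addr.
elim/ltn_ind: n k => n IHn; elim/ltn_ind => k IHk lekn.
have {}IHn i j : (i + j < n)%N -> a i * b j = 0.
  by move=> ltijn; rewrite -(addKn i j) IHn ?leq_addr.
apply: reduced_mulr_sqr_eq0 => //; rewrite -mulrA.
have := congr1 (fun F => a k * F n) ab0; rewrite /ps_zero mulr0 => <-.
rewrite /ps_mul mulr_sumr (bigD1 (Ordinal (lekn : (k < n.+1)%N))) //=.
rewrite big1 ?addr0 // => i; rewrite -val_eqE /= => neqik.
case: ltngtP neqik => // [ltik|ltki] _; first by rewrite IHk ?mulr0 // -ltnS.
by rewrite mulrCA IHn ?mulr0 //; have := ltn_ord i; lia.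
Qed.

Lemma coef_mul_eq0_ps_mul (a b : powerseries R) :
  (forall i j, a i * b j = 0) -> ps_mul a b = @ps_zero R.
Proof.
move=> ab0; apply: functional_extensionality => n.
by rewrite /ps_mul /ps_zero big1.
Qed.

Lemma ps_complemented_reduced : powerseries_complemented R -> reduced R.
Proof.
move=> compl; apply/reduced_sqr_eq0 => a aa0.
have [B [aB0 regaB]] := compl (ps_C a).
apply: (regular_ps_coef_ann regaB) => n.
have aBn : a * B n = 0 by rewrite -ps_mulCl aB0.
rewrite /ps_add mulrDl [B n * a]mulrC aBn addr0 /ps_C.
by case: eqP; rewrite ?aa0 ?mul0r.
Qed.

Lemma dense_ideal_sum_complement (I : R -> Prop) (g h : powerseries R) :
    (forall x, I x <-> ideal_gen g x) ->
    regular_in (@ps_zero R) (@ps_mul R) (ps_add g h) ->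
  dense (ideal_sum I (ideal_gen h)).
Proof.
move=> defI regF r annr; apply: (regular_ps_coef_ann regF) => n.
have I0 : I 0 by apply/defI/ideal_gen0.
have Ign : I (g n) by apply/defI/ideal_gen_mem.
rewrite /ps_add mulrDl ![_ * r]mulrC (annr (g n)); last first.
  by exists (g n), 0; rewrite addr0; split=> //; apply: ideal_gen0.
rewrite (annr (h n)) ?addr0 //.
by exists 0, (h n); rewrite add0r; split=> //; apply: ideal_gen_mem.
Qed.

Lemma regular_ps_add_of_dense (f k : powerseries R) (J : R -> Prop) :
    reduced R -> (forall i j, f i * k j = 0) ->
    (forall y, J y <-> ideal_gen k y) -> dense (ideal_sum (ideal_gen f) J) ->
  regular_in (@ps_zero R) (@ps_mul R) (ps_add f k).
Proof.
move=> red fk0 defJ densefJ c Fc0; have Fc := ps_mul_eq0_coef red Fc0.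
have fc0 i j : f i * c j = 0.
  apply: reduced_mulr_sqr_eq0 => //.
  have := congr1 ( *%R (f i)) (Fc i j).
  by rewrite mulr0 /ps_add mulrDl mulrDr !mulrA fk0 mul0r addr0.
have kc0 i j : k i * c j = 0 by have := Fc i j; rewrite /ps_add mulrDl fc0 add0r.
apply: functional_extensionality => j; apply: densefJ => _ [x [y [fx /defJ ky ->]]].
by rewrite mulrDr !(ideal_gen_ann _ fx, ideal_gen_ann _ ky) ?addr0 // => i;
  rewrite mulrC.
Qed.

Definition has_countable_dense_complements : Prop :=
  forall I : R -> Prop, is_ideal I -> countably_generated I ->
    exists J : R -> Prop,
      [/\ is_ideal J, countably_generated J, ideal_prod_zero I J &
          dense (ideal_sum I J)].

Lemma ps_complemented_countable_dense_complements :
  powerseries_complemented R -> has_countable_dense_complements.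
Proof.
move=> compl I _ [g defI]; have red := ps_complemented_reduced compl.
have [h [gh0 regF]] := compl g.
exists (ideal_gen h); split.
- exact: ideal_gen_is_ideal.
- by exists h.
- by move=> x y /defI; apply: (ideal_gen_prod_zero (ps_mul_eq0_coef red gh0)).
- exact: dense_ideal_sum_complement defI regF.
Qed.

Lemma countable_dense_complements_ps_complemented :
  reduced R -> has_countable_dense_complements -> powerseries_complemented R.
Proof.
move=> red compl f.
have [J [_ [k defJ] fJ0 densefJ]] :=
  compl _ (ideal_gen_is_ideal f) (ex_intro _ f (fun=> iff_refl _)).
have fk0 i j : f i * k j = 0.
  by apply: fJ0; [apply: ideal_gen_mem | apply/defJ/ideal_gen_mem].
exists k; split; first exact: coef_mul_eq0_ps_mul.
exact: regular_ps_add_of_dense densefJ.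
Qed.

End ComplementedPowerSeries.

Theorem mainTheorem3 (R : comPzRingType) :
  powerseries_complemented R <->
  (reduced R /\
   forall I : R -> Prop, is_ideal I -> countably_generated I ->
     exists J : R -> Prop,
       [/\ is_ideal J, countably_generated J, ideal_prod_zero I J &
           dense (ideal_sum I J)]).
Proof.
split=> [compl|[red complI]].
  split; first exact: ps_complemented_reduced.
  exact: ps_complemented_countable_dense_complements.
exact: countable_dense_complements_ps_complemented red complI.
Qed.
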